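(* Let $G_N$ be the Poissonian random graph with capacities $\lambda_1,\dots,\lambda_N$, and let $A_1\ne A_2$ be two distinct nodes. Fix integers $k,t\ge0$. Conditionally on $\mathcal N^{(1)}_k$ and $\mathcal N^{(2)}_t$ and given that $\mathcal N^{(1)}_k\cap\mathcal N^{(2)}_t=\emptyset$, the number of edges between the nodes of $\partial\mathcal N^{(1)}_k$ and the nodes of $\partial\mathcal N^{(2)}_t$ is Poisson distributed with mean $$\frac{\underline C^{(1)}_{k+1}\,\underline C^{(2)}_{t+1}}{l_N},\qquad\text{where } \underline C^{(1)}_{k+1}=\sum_{i\in\partial\mathcal N^{(1)}_k}\lambda_i,\ \ \underline C^{(2)}_{t+1}=\sum_{j\in\partial\mathcal N^{(2)}_t}\lambda_j.$$
   Context: Poissonian random graph: on nodes $\{1,\dots,N\}$ with capacities $\lambda_i>0$ and $l_N=\sum_i\lambda_i$, the numbers of edges $E_{ij}$ between distinct nodes $i,j$ are independent Poisson random variables with mean $\lambda_i\lambda_j/l_N$ (multiple edges allowed). For a node $A_i$, $\partial\mathcal N^{(i)}_k=\{j: d(A_i,j)=k\}$ and $\mathcal N^{(i)}_k=\{j: d(A_i,j)\le k\}$, with $d$ the graph distance. *)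

From HB Require Import structures.
From mathcomp Require Import all_boot all_order all_algebra.
From mathcomp Require Import all_classical all_reals all_analysis.
Set Implicit Arguments. Unset Strict Implicit. Unset Printing Implicit Defensive.
Import Order.TTheory GRing.Theory Num.Theory.
Local Open Scope classical_set_scope.
Local Open Scope ring_scope.

(* Poisson probability mass function with mean mu >= 0 (mu = 0 gives the
   Dirac mass at 0, since 0 ^+ 0 = 1). *)
Definition poisson_mass {R : realType} (mu : R) (n : nat) : R :=
  mu ^+ n / n`!%:R * expR (- mu).

Definition adjacent (N : nat) (E : 'I_N -> 'I_N -> nat) (i j : 'I_N) : bool :=
  (i != j) && (0 < E i j)%N.

(* nbhd_ball E a k = N_k^{(a)} = { j : d(a, j) <= k } (graph distance). *)
Fixpoint nbhd_ball (N : nat) (E : 'I_N -> 'I_N -> nat) (a : 'I_N) (k : nat)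
  : {set 'I_N} :=
  match k with
  | 0 => [set a]
  | k'.+1 => nbhd_ball E a k' :|: [set j | [exists i in nbhd_ball E a k', adjacent E i j]]
  end.

(* shell B k = B k \ B (k-1) for a sequence of balls B, with shell B 0 = B 0.
   For B = nbhd_ball E a this is  dN_k^{(a)} = { j : d(a, j) = k }. *)
Definition shell (N : nat) (B : nat -> {set 'I_N}) (k : nat) : {set 'I_N} :=
  match k with
  | 0 => B 0
  | k'.+1 => B k'.+1 :\: B k'
  end.

Definition poissonian_graph {d : measure_display} {T : measurableType d}
  {R : realType} (P : probability T R) (N : nat) (lam : 'I_N -> R)
  (E : 'I_N -> 'I_N -> T -> nat) : Prop :=
  [/\ (forall (i j : 'I_N) x, E i j x = E j i x),
      (forall (i j : 'I_N) (n : nat), measurable [set x | E i j x = n]),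
      (forall (i j : 'I_N) (n : nat), (i < j)%N ->
         P [set x | E i j x = n] =
         (poisson_mass (lam i * lam j / \sum_(l < N) lam l) n)%:E) &
      (forall (S : {set 'I_N * 'I_N}) (n : 'I_N * 'I_N -> nat),
         (forall p, p \in S -> (p.1 < p.2)%N) ->
         P [set x | forall p, p \in S -> E p.1 p.2 x = n p] =
         (\prod_(p in S) P [set x | E p.1 p.2 x = n p])%E)].

Definition cond_prob {d : measure_display} {T : measurableType d}
  {R : realType} (P : probability T R) (A B : set T) : R :=
  fine (P (A `&` B)) / fine (P B).

From Pilot Require Import Defs.
From HB Require Import structures.
From mathcomp Require Import all_boot all_order all_algebra.
From mathcomp Require Import all_classical all_reals all_analysis.
From mathcomp Require Import ring.
Set Implicit Arguments. Unset Strict Implicit. Unset Printing Implicit Defensive.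
Import Order.TTheory GRing.Theory Num.Theory.
Local Open Scope classical_set_scope.
Local Open Scope ring_scope.

(* So the conditioning event depends only on the adjacency pattern of
   the pairs outside the set S of shell-to-shell pairs, which is independent of
   the edge counts on S; the number of shell-to-shell edges, a sum of independent
   Poisson variables, keeps its law, of mean sum_(i,j) lam_i lam_j / l_N.
   Independence is assumed only for events fixing all edge counts of a set of
   pairs; complementation extends it to events also requiring some counts to be
   positive, and splitting on one pair at a time to events that only see an
   adjacency pattern. *)

Lemma poisson_mass0 (R : realType) n : poisson_mass (0 : R) n = (n == 0)%:R.
Proof.
by case: n => [|n]; rewrite /poisson_mass oppr0 expR0 mulr1 ?expr0 ?fact0 ?divr1 // expr0n mul0r.
Qed.

Lemma poisson_mass_convolution (R : realType) (a b : R) n :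
  \sum_(m < n.+1) poisson_mass a (n - m) * poisson_mass b m = poisson_mass (a + b) n.
Proof.
rewrite /poisson_mass exprDn opprD expRD mulr_suml big_distrl /=.
apply: eq_bigr => -[m /= le_mn] _; rewrite ltnS in le_mn.
have factE : (n`!%:R : R) = 'C(n, m)%:R * (m`!%:R * (n - m)`!%:R).
  by rewrite -!natrM bin_fact.
have fact_neq0 j : (j`!%:R : R) != 0 by rewrite pnatr_eq0 -lt0n fact_gt0.
have bin_neq0 : ('C(n, m)%:R : R) != 0 by rewrite pnatr_eq0 -lt0n bin_gt0.
by rewrite factE -mulr_natr; field; rewrite !fact_neq0 bin_neq0.
Qed.

Lemma finset_ind (U : finType) (Q : {set U} -> Prop) :
  Q finset.set0 -> (forall (x : U) (A : {set U}), x \notin A -> Q A -> Q (x |: A)) ->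
  forall A, Q A.
Proof.
move=> Q0 QU1 A; elim: {A}#|A| {-2}A (erefl #|A|) => [|n IH] A cardA.
  by move/eqP: cardA; rewrite cards_eq0 => /eqP ->.
have [x Ax] : exists x, x \in A by apply/card_gt0P; rewrite cardA.
rewrite -(finset.setD1K Ax); apply: QU1; first by rewrite !inE eqxx.
by apply: IH; move: cardA; rewrite (cardsD1 x A) Ax add1n => -[].
Qed.

Lemma disjoint_setU1 (U : finType) x (A B : {set U}) :
  [disjoint x |: A & B]%B = (x \notin B) && [disjoint A & B]%B.
Proof. by rewrite !finset.disjoints_subset finset.subUset finset.sub1set inE. Qed.

Section Neighbourhoods.
Variable N : nat.
Implicit Types (F G : 'I_N -> 'I_N -> nat) (B C : nat -> {set 'I_N}).

Lemma nbhd_ball_mono F a m m' : (m <= m')%N -> nbhd_ball F a m \subset nbhd_ball F a m'.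
Proof.
elim: m' => [|m' IH]; first by rewrite leqn0 => /eqP ->.
rewrite leq_eqVlt => /orP[/eqP -> //|]; rewrite ltnS => /IH le_m_m'.
exact: fintype.subset_trans le_m_m' (finset.subsetUl _ _).
Qed.

Lemma eq_nbhd_ball F G a m :
  (forall m', (m' < m)%N -> forall i j, i \in nbhd_ball G a m' ->
     Defs.adjacent F i j = Defs.adjacent G i j) ->
  nbhd_ball F a m = nbhd_ball G a m.
Proof.
elim: m => [|m IH] FG //=.
have -> : nbhd_ball F a m = nbhd_ball G a m by apply: IH => m' /ltnW; apply: FG.
congr (_ :|: _); apply/setP => j; rewrite !inE; apply: eq_existsb => i.
by case: (boolP (i \in _)) => //= iG; rewrite (FG m).
Qed.

Lemma shell_subset B k : shell B k \subset B k.
Proof. by case: k => [|k] /=; [exact: subxx | exact: subsetDl]. Qed.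

Lemma disjoint_shells B C k t :
  [disjoint B k & C t]%B -> [disjoint shell B k & shell C t]%B.
Proof.
move=> BC; apply: fintype.disjointWl (shell_subset B k) _.
exact: fintype.disjointWr (shell_subset C t) BC.
Qed.

Lemma eq_shell B B' k : (forall m, (m <= k)%N -> B' m = B m) -> shell B' k = shell B k.
Proof. by case: k => [|k] BB' /=; rewrite !BB'. Qed.

Lemma eq_nbhd_balls F G a B k :
  (forall m, (m <= k)%N -> nbhd_ball G a m = B m) ->
  (forall i j, i \in B k -> i \notin shell B k ->
     Defs.adjacent F i j = Defs.adjacent G i j) ->
  forall m, (m <= k)%N -> nbhd_ball F a m = B m.
Proof.
move=> GB FG m le_mk; rewrite -GB //; apply: eq_nbhd_ball => m' lt_m'm i j iG.
case: k GB FG le_mk => [|k] GB FG le_mk; first by case: m lt_m'm le_mk.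
have le_m'k : (m' <= k)%N by rewrite -ltnS (leq_trans lt_m'm).
apply: FG.
  by rewrite -GB //; exact: fintype.subsetP (nbhd_ball_mono G a (leqW le_m'k)) _ iG.
by rewrite !inE negb_and negbK -(GB k) // (fintype.subsetP (nbhd_ball_mono G a le_m'k)).
Qed.

Lemma nbhd_ball_off_shells F G a B C k t :
  [disjoint B k & C t]%B ->
  (forall i j, ~~ ((i \in shell B k) && (j \in shell C t)
                    || (i \in shell C t) && (j \in shell B k)) ->
     Defs.adjacent F i j = Defs.adjacent G i j) ->
  (forall m, (m <= k)%N -> nbhd_ball G a m = B m) ->
  forall m, (m <= k)%N -> nbhd_ball F a m = B m.
Proof.
move=> BC FG GB; apply: eq_nbhd_balls GB _ => i j iB iNsh; apply: FG.
have iNC : i \notin shell C t.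
  by apply: contraFN (disjointFr BC iB) => /(fintype.subsetP (shell_subset C t)).
by rewrite (negbTE iNsh) (negbTE iNC).
Qed.

End Neighbourhoods.

Section Pairs.
Variable N : nat.
Implicit Types (X Y : {set 'I_N}) (p q : 'I_N * 'I_N).

(* An unordered pair {i, j} is represented by its increasing orientation, the one
   whose edge count is specified in [poissonian_graph]. *)
Definition sort_pair p : 'I_N * 'I_N := if (p.1 < p.2)%N then p else (p.2, p.1).

Definition upper_pairs : {set 'I_N * 'I_N} :=
  [set p : 'I_N * 'I_N | (p.1 < p.2)%N]%SET.

Lemma sort_pairC (i j : 'I_N) : sort_pair (j, i) = sort_pair (i, j).
Proof. by rewrite /sort_pair /=; case: ltngtP => // /ord_inj ->. Qed.

Lemma sort_pair_upper (i j : 'I_N) : i != j -> sort_pair (i, j) \in upper_pairs.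
Proof.
move=> ij; rewrite /sort_pair inE; case: (ltngtP i j) => // /ord_inj eq_ij.
by rewrite eq_ij eqxx in ij.
Qed.

Lemma sort_pair_eq p q : sort_pair p = sort_pair q -> p = q \/ p = (q.2, q.1).
Proof.
case: p q => [i j] [i' j']; rewrite -[in RHS](sort_pairC i' j').
by rewrite /sort_pair /=; do 2 case: ifP => _; move=> [-> ->]; auto.
Qed.

Lemma mem_sort_pair_imset X Y (i j : 'I_N) :
  (sort_pair (i, j) \in sort_pair @: finset.setX X Y) =
  (i \in X) && (j \in Y) || (i \in Y) && (j \in X).
Proof.
apply/imsetP/idP => [[[a b]]|].
  rewrite inE /= => /andP[aX bY] /sort_pair_eq [] [-> ->].
    by rewrite aX bY.
  by rewrite aX bY orbT.
case/orP => ij; first by exists (i, j); rewrite ?inE.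
by exists (j, i); [rewrite inE /= andbC | rewrite sort_pairC].
Qed.

Lemma sort_pair_imset_upper X Y :
  [disjoint X & Y]%B -> sort_pair @: finset.setX X Y \subset upper_pairs.
Proof.
move=> XY; apply/fintype.subsetP => _ /imsetP[[i j] + ->].
rewrite inE /= => /andP[iX jY]; apply: sort_pair_upper.
by apply: contraTneq jY => <-; rewrite (disjointFr XY iX).
Qed.

Lemma big_sort_pair (V : Type) (idx : V) (op : Monoid.com_law idx) X Y
    (F : 'I_N * 'I_N -> V) :
  [disjoint X & Y]%B -> (forall i j, F (i, j) = F (j, i)) ->
  \big[op/idx]_(i in X) \big[op/idx]_(j in Y) F (i, j) =
  \big[op/idx]_(p in sort_pair @: finset.setX X Y) F p.
Proof.
move=> XY Fsym; rewrite big_imset /=; last first.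
  move=> [a b] [a' b']; rewrite !inE /= => /andP[aX _] /andP[_ b'Y].
  case/sort_pair_eq => // -[ab' _]; by rewrite -ab' (disjointFr XY aX) in b'Y.
rewrite pair_big /=; apply: eq_big => [[i j]|[i j] _]; first by rewrite !inE.
by rewrite /sort_pair; case: ifP => // _; rewrite Fsym.
Qed.

End Pairs.

Lemma eta_with_notin (aT : eqType) (rT : Type) (f : aT -> rT) a y (A : {pred aT}) :
  a \notin A -> {in A, [eta f with a |-> y] =1 f}.
Proof. by move=> aA x xA /=; case: eqP xA => // ->; rewrite (negbTE aA). Qed.

Section PoissonianGraph.
Variables (d : measure_display) (T : measurableType d) (R : realType).
Variables (P : probability T R) (N : nat) (lam : 'I_N -> R).
Variable E : 'I_N -> 'I_N -> T -> nat.
Hypothesis graphE : poissonian_graph P lam E.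

Local Notation upper := (upper_pairs N).
Implicit Types (A B : set T) (S U W : {set 'I_N * 'I_N}) (p q : 'I_N * 'I_N)
  (D : 'I_N * 'I_N -> option nat) (Phi : {set 'I_N * 'I_N} -> Prop).

Definition pr A : R := fine (P A).

Lemma prE A : measurable A -> P A = (pr A)%:E.
Proof. by move=> mA; rewrite /pr fineK // fin_num_measure. Qed.

Lemma prU A B : measurable A -> measurable B -> A `&` B = set0 ->
  pr (A `|` B) = pr A + pr B.
Proof. by move=> mA mB AB; rewrite /pr measureU // fineD // fin_num_measure. Qed.

Lemma prD A B : measurable A -> measurable B -> B `<=` A -> pr (A `\` B) = pr A - pr B.
Proof.
move=> mA mB BA; rewrite -[in pr A](setDKU BA) prU ?addrK ?setDKI //.
exact: measurableD.
Qed.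

Lemma pr_bigcup n (F : nat -> set T) :
  (forall m, measurable (F m)) -> trivIset `I_n F ->
  pr (\bigcup_(m < n) F m) = \sum_(m < n) pr (F m).
Proof.
move=> mF tF; rewrite bigcup_mkord /pr measure_semi_additive_ord_I //; last first.
  exact: bigsetU_measurable.
by rewrite (eq_bigr (fun m : 'I_n => (pr (F m))%:E)) ?sumEFin // => m _; exact: prE.
Qed.

Lemma measurable_const_set (Q : Prop) : measurable [set _ : T | Q].
Proof.
have [HQ|HQ] := pselect Q.
  by rewrite (_ : [set _ | Q] = setT) //; apply/seteqP; split.
by rewrite (_ : [set _ | Q] = set0) //; apply/seteqP; split.
Qed.

Definition mean p : R := lam p.1 * lam p.2 / \sum_(l < N) lam l.

Definition edge_constraint (c : option nat) (e : nat) : Prop :=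
  if c is Some m then e = m else (0 < e)%N.

Definition constraint_set c p : set T := [set x | edge_constraint c (E p.1 p.2 x)].

Definition constraint_event U D : set T :=
  [set x | forall p, p \in U -> edge_constraint (D p) (E p.1 p.2 x)].

Definition constraint_mass (c : option nat) (mu : R) : R :=
  if c is Some m then poisson_mass mu m else 1 - poisson_mass mu 0.

Lemma measurable_edge_count p n : measurable [set x | E p.1 p.2 x = n].
Proof. by case: graphE => _ + _ _; apply. Qed.

Lemma measurable_constraint_set c p : measurable (constraint_set c p).
Proof.
case: c => [m|]; first exact: measurable_edge_count.
have -> : constraint_set None p = ~` [set x | E p.1 p.2 x = 0%N].
  by apply/seteqP; split => x /=; rewrite lt0n => /eqP.
exact/measurableC/measurable_edge_count.
Qed.

Lemma constraint_event0 D : constraint_event finset.set0 D = setT.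
Proof. by apply/seteqP; split => x // _ p; rewrite inE. Qed.

Lemma constraint_eventU1 p U D :
  constraint_event (p |: U) D = constraint_set (D p) p `&` constraint_event U D.
Proof.
apply/seteqP; split => x /=.
  by move=> Ux; split=> [|q qU]; apply: Ux; rewrite !inE ?eqxx ?qU ?orbT.
by move=> [px Ux] q; rewrite !inE => /orP[/eqP -> //|]; exact: Ux.
Qed.

Lemma eq_constraint_event U D D' :
  {in U, D =1 D'} -> constraint_event U D = constraint_event U D'.
Proof.
by move=> DD'; apply/seteqP; split => x /= Ux p pU; have := Ux p pU; rewrite DD'.
Qed.

Lemma measurable_constraint_event U D : measurable (constraint_event U D).
Proof.
elim/finset_ind: U => [|p U _ IH]; first by rewrite constraint_event0.
by rewrite constraint_eventU1; apply: measurableI => //; exact: measurable_constraint_set.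
Qed.

Lemma constraint_event_pos q U D : q \notin U -> D q = None ->
  constraint_event (q |: U) D =
  constraint_event U D `\` constraint_event (q |: U) [eta D with q |-> Some 0%N].
Proof.
move=> qU Dq; rewrite !constraint_eventU1 (eq_constraint_event (eta_with_notin D _ qU)).
rewrite /constraint_set Dq /= eqxx; apply/seteqP; split => x /= [Eq Ux].
  by split => // -[Eq0 _]; rewrite Eq0 in Eq.
by split => //; rewrite lt0n; apply/eqP => Eq0; apply: Ux.
Qed.

Lemma pr_edge_counts U (m : 'I_N * 'I_N -> nat) : U \subset upper ->
  pr [set x | forall p, p \in U -> E p.1 p.2 x = m p] =
  \prod_(p in U) poisson_mass (mean p) (m p).
Proof.
move=> Uup; have upperU p : p \in U -> (p.1 < p.2)%N.
  by move/(fintype.subsetP Uup); rewrite inE.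
case: graphE => _ _ massE indep; rewrite /pr indep //.
rewrite (eq_bigr (fun p => (poisson_mass (mean p) (m p))%:E)) ?prodEFin // => p pU.
by rewrite massE ?upperU.
Qed.

Lemma pr_constraint_event U D : U \subset upper ->
  pr (constraint_event U D) = \prod_(p in U) constraint_mass (D p) (mean p).
Proof.
move: {2}[set p in U | D p == None]%SET (erefl [set p in U | D p == None]%SET) => V.
elim/finset_ind: V U D => [|q V qV IH] U D defV Uup.
  have DU : {in U, D =1 fun p => Some (odflt 0%N (D p))}.
    move=> p pU /=; case Dp: (D p) => //.
    by have := finset.in_set0 p; rewrite -defV inE pU Dp.
  rewrite (eq_constraint_event DU) (pr_edge_counts (fun p => odflt 0%N (D p))) //.
  by apply: eq_bigr => p /DU ->.
have /andP[qU /eqP Dq] : (q \in U) && (D q == None).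
  by move: (finset.setU11 q V); rewrite -defV inE.
set D0 := [eta D with q |-> Some 0%N].
have defV' : [set p in U :\ q | D p == None]%SET = V.
  by apply/setP => p; rewrite -(setU1K qV) -defV !inE andbA.
have defV0 : [set p in U | D0 p == None]%SET = V.
  apply/setP => p; rewrite -(setU1K qV) -defV !inE /D0 /=.
  by case: (p =P q); rewrite /= ?andbF.
have D0D : {in U :\ q, D0 =1 D} by apply: eta_with_notin; rewrite setD11.
rewrite -(finset.setD1K qU) constraint_event_pos ?setD11 // finset.setD1K //.
rewrite prD; [|exact: measurable_constraint_event..|]; last first.
  rewrite -(finset.setD1K qU) constraint_eventU1 finset.setD1K //.
  by rewrite (eq_constraint_event D0D) => x [].
rewrite IH //; last exact: fintype.subset_trans (finset.subsetDl U [set q]) Uup.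
rewrite IH // [X in _ - X](big_setD1 q qU) [RHS](big_setD1 q qU) /D0 /= eqxx Dq.
rewrite -(eq_bigr _ (fun p pU => congr1 (constraint_mass ^~ _) (D0D p pU))).
by rewrite mulrBl mul1r.
Qed.

Definition edge_sum S x : nat := (\sum_(p in S) E p.1 p.2 x)%N.

Definition mean_sum S : R := \sum_(p in S) mean p.

Lemma edge_sum_sort_pair (X Y : {set 'I_N}) x : [disjoint X & Y]%B ->
  edge_sum (@sort_pair N @: finset.setX X Y) x = (\sum_(i in X) \sum_(j in Y) E i j x)%N.
Proof.
move=> XY; symmetry; apply: (big_sort_pair _ _ (F := fun p => E p.1 p.2 x)) => //.
by case: graphE.
Qed.

Lemma mean_sum_sort_pair (X Y : {set 'I_N}) : [disjoint X & Y]%B ->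
  mean_sum (@sort_pair N @: finset.setX X Y) =
  (\sum_(i in X) lam i) * (\sum_(j in Y) lam j) / \sum_(l < N) lam l.
Proof.
move=> XY; rewrite /mean_sum -(big_sort_pair _ _ (F := mean)) //; last first.
  by move=> i j; rewrite /mean /= [lam j * _]mulrC.
rewrite mulr_suml mulr_suml; apply: eq_bigr => i _.
by rewrite mulr_sumr mulr_suml.
Qed.

Lemma edge_sumU1_constraint p S U D n : p \notin S -> p \notin U ->
  [set x | edge_sum (p |: S) x = n] `&` constraint_event U D =
  \bigcup_(m < n.+1) ([set x | edge_sum S x = (n - m)%N] `&`
                      constraint_event (p |: U) [eta D with p |-> Some m]).
Proof.
move=> pS pU; apply/seteqP; split => x /=.
  rewrite /edge_sum big_setU1 //= => -[sumx Ux]; exists (E p.1 p.2 x).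
    by rewrite /= ltnS -sumx leq_addr.
  rewrite constraint_eventU1 (eq_constraint_event (eta_with_notin D _ pU)).
  by rewrite /constraint_set /= eqxx -sumx addKn.
move=> [m /= lt_mn]; rewrite constraint_eventU1 (eq_constraint_event (eta_with_notin D _ pU)).
rewrite /constraint_set /= eqxx => -[sumx [Epx Ux]]; split => //.
by rewrite /edge_sum big_setU1 //= Epx -/(edge_sum S x) sumx subnKC // -ltnS.
Qed.

Lemma measurable_edge_sum S n : measurable [set x | edge_sum S x = n].
Proof.
elim/finset_ind: S n => [|p S pS IH] n.
  rewrite (_ : [set x | _] = [set _ | 0%N = n]); first exact: measurable_const_set.
  by apply/seteqP; split => x /=; rewrite /edge_sum big_set0.
have := edge_sumU1_constraint (fun _ => None) n pS (negbT (finset.in_set0 p)).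
rewrite constraint_event0 setIT => ->; apply: bigcup_measurable => m _.
by apply: measurableI => //; exact: measurable_constraint_event.
Qed.

Lemma pr_edge_sum_constraint S U D n :
  [disjoint S & U]%B -> S \subset upper -> U \subset upper ->
  pr ([set x | edge_sum S x = n] `&` constraint_event U D) =
  poisson_mass (mean_sum S) n * \prod_(p in U) constraint_mass (D p) (mean p).
Proof.
elim/finset_ind: S n U D => [|p S pS IH] n U D SU Sup Uup.
  rewrite /mean_sum big_set0 poisson_mass0; case: n => [|n].
    rewrite (_ : [set x | _] = setT) ?setTI ?pr_constraint_event ?mul1r //.
    by apply/seteqP; split => x //= _; rewrite /edge_sum big_set0.
  rewrite (_ : [set x | _] = set0) ?set0I ?mul0r /pr ?measure0 //.
  by apply/seteqP; split => x //=; rewrite /edge_sum big_set0.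
move: SU Sup; rewrite disjoint_setU1 finset.subUset finset.sub1set.
move=> /andP[pU SU] /andP[pup Sup].
have SpU : [disjoint S & p |: U]%B by rewrite disjoint_sym disjoint_setU1 pS disjoint_sym.
have pUup : p |: U \subset upper by rewrite finset.subUset finset.sub1set pup.
rewrite edge_sumU1_constraint // pr_bigcup; first last.
- apply/trivIsetP => m m' _ _ mm'; apply/seteqP; split => x // [[_ +] [_ +]].
  rewrite !constraint_eventU1 /constraint_set /= !eqxx => -[-> _] [Em' _].
  by rewrite Em' eqxx in mm'.
- move=> m; apply: measurableI; first exact: measurable_edge_sum.
  exact: measurable_constraint_event.
rewrite (eq_bigr (fun m : 'I_n.+1 => poisson_mass (mean_sum S) (n - m) *
  poisson_mass (mean p) m * \prod_(q in U) constraint_mass (D q) (mean q))); last first.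
  move=> m _; rewrite IH // big_setU1 //= eqxx -mulrA; congr (_ * (_ * _)).
  by apply: eq_bigr => q; case: eqP => [->|]; rewrite ?(negbTE pU).
by rewrite -big_distrl /= poisson_mass_convolution /mean_sum big_setU1 //= addrC.
Qed.

Definition adjacency_pattern W x : {set 'I_N * 'I_N} :=
  [set q in W | (0 < E q.1 q.2 x)%N]%SET.

Definition pattern_event W Phi : set T := [set x | Phi (adjacency_pattern W x)].

Lemma adjacency_pattern0 x : adjacency_pattern finset.set0 x = finset.set0.
Proof. by apply/setP => q; rewrite !inE. Qed.

Lemma adjacency_patternU1 q W x : q \notin W ->
  adjacency_pattern (q |: W) x =
  if (0 < E q.1 q.2 x)%N then q |: adjacency_pattern W x else adjacency_pattern W x.
Proof.
move=> qW; apply/setP => r; rewrite !inE; case: ifP => Eq; rewrite !inE.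
  by case: eqP => [->|]; rewrite ?Eq.
by case: eqP => [->|] //=; rewrite Eq andbF.
Qed.

Lemma pattern_event0 Phi : pattern_event finset.set0 Phi = [set _ | Phi finset.set0].
Proof. by apply/seteqP; split => x; rewrite /pattern_event /= adjacency_pattern0. Qed.

Lemma pattern_eventU1 q W Phi : q \notin W ->
  pattern_event (q |: W) Phi =
  (constraint_set (Some 0%N) q `&` pattern_event W Phi) `|`
  (constraint_set None q `&` pattern_event W (fun b => Phi (q |: b))).
Proof.
move=> qW; apply/seteqP; split => x; rewrite /pattern_event /= adjacency_patternU1 //.
  by case: ifP => Eq; [right | left; move/negbT: Eq; rewrite lt0n negbK => /eqP].
by case=> -[Eq]; rewrite Eq.
Qed.

Lemma measurable_pattern_event W Phi : measurable (pattern_event W Phi).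
Proof.
elim/finset_ind: W Phi => [|q W qW IH] Phi.
  by rewrite pattern_event0; exact: measurable_const_set.
rewrite pattern_eventU1 //; apply: measurableU; apply: measurableI => //.
all: exact: measurable_constraint_set.
Qed.

Lemma pattern_event_saturated W A :
  (forall x y, A y ->
     {in W, forall p, (0 < E p.1 p.2 x)%N = (0 < E p.1 p.2 y)%N} -> A x) ->
  A = pattern_event W (fun b => exists2 y, A y & adjacency_pattern W y = b).
Proof.
move=> satA; apply/seteqP; split => [x Ax | x [y Ay xy]]; first by exists x.
apply: satA Ay _ => p pW.
by move/(congr1 (fun b : {set 'I_N * 'I_N} => p \in b)): xy; rewrite !inE pW /= => ->.
Qed.

Lemma constraint_pattern_splitU1 (X : set T) U W D q Phi :
  q \notin U -> q \notin W ->
  X `&` constraint_event U D `&` pattern_event (q |: W) Phi =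
  (X `&` constraint_event (q |: U) [eta D with q |-> Some 0%N]
     `&` pattern_event W Phi) `|`
  (X `&` constraint_event (q |: U) [eta D with q |-> None]
     `&` pattern_event W (fun b => Phi (q |: b))).
Proof.
move=> qU qW; rewrite pattern_eventU1 // !constraint_eventU1.
rewrite (eq_constraint_event (eta_with_notin D (Some 0%N) qU)).
rewrite (eq_constraint_event (eta_with_notin D None qU)) /= eqxx.
apply/seteqP; split => x /=.
  by move=> [[Xx Ux] [[Eq Wx]|[Eq Wx]]]; [left | right].
move=> [[[Xx [Eq Ux]] Wx]|[[Xx [Eq Ux]] Wx]].
  by split; [split | left].
by split; [split | right].
Qed.

Lemma pr_edge_sum_pattern S U W D Phi n :
  [disjoint S & U]%B -> [disjoint W & U]%B -> [disjoint W & S]%B ->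
  S \subset upper -> U \subset upper -> W \subset upper ->
  pr ([set x | edge_sum S x = n] `&` constraint_event U D `&` pattern_event W Phi) =
  poisson_mass (mean_sum S) n * pr (constraint_event U D `&` pattern_event W Phi).
Proof.
elim/finset_ind: W Phi U D => [|q W qW IH] Phi U D SU WU WS Sup Uup Wup.
  rewrite pattern_event0; have [Phi0|nPhi0] := pselect (Phi finset.set0).
    rewrite (_ : [set _ | Phi finset.set0] = setT) ?setIT; last by apply/seteqP; split.
    by rewrite pr_edge_sum_constraint // pr_constraint_event.
  rewrite (_ : [set _ | Phi finset.set0] = set0) ?setI0 /pr ?measure0 ?mulr0 //.
  by apply/seteqP; split.
move: WU WS Wup; rewrite !disjoint_setU1 finset.subUset finset.sub1set.
move=> /andP[qU WU] /andP[qS WS] /andP[qup Wup].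
have SqU : [disjoint S & q |: U]%B by rewrite disjoint_sym disjoint_setU1 qS disjoint_sym.
have WqU : [disjoint W & q |: U]%B by rewrite disjoint_sym disjoint_setU1 qW disjoint_sym.
have qUup : q |: U \subset upper by rewrite finset.subUset finset.sub1set qup.
have mX (X : set T) U' D' Phi' : measurable X ->
    measurable (X `&` constraint_event U' D' `&` pattern_event W Phi').
  move=> mX; apply: measurableI; last exact: measurable_pattern_event.
  by apply: measurableI => //; exact: measurable_constraint_event.
have dX (X : set T) Phi1 Phi2 :
    (X `&` constraint_event (q |: U) [eta D with q |-> Some 0%N] `&` pattern_event W Phi1)
    `&` (X `&` constraint_event (q |: U) [eta D with q |-> None] `&` pattern_event W Phi2)
    = set0.
  apply/seteqP; split => x // [[[_ +] _] [[_ +] _]].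
  by rewrite !constraint_eventU1 /constraint_set /= !eqxx => -[-> _] [].
rewrite constraint_pattern_splitU1 // prU; [|exact: mX (measurable_edge_sum _ _)..|exact: dX].
rewrite -[constraint_event U D]setTI constraint_pattern_splitU1 // prU.
- by rewrite !setTI !IH // mulrDr.
- exact: mX.
- exact: mX.
- exact: dX.
Qed.

Lemma adjacent_off_pairs S x y :
  {in upper :\: S, forall p, (0 < E p.1 p.2 x)%N = (0 < E p.1 p.2 y)%N} ->
  forall i j, sort_pair (i, j) \notin S ->
  Defs.adjacent (fun i j => E i j x) i j = Defs.adjacent (fun i j => E i j y) i j.
Proof.
move=> xy i j ijS; rewrite /Defs.adjacent; case: eqVneq => //= ij.
have sortE z : E (sort_pair (i, j)).1 (sort_pair (i, j)).2 z = E i j z.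
  by rewrite /sort_pair; case: ifP => //= _; case: graphE => + _ _ _; apply.
by rewrite -!sortE xy // inE ijS sort_pair_upper.
Qed.

Lemma cond_prob_edge_sum S A n : S \subset upper ->
  (forall x y, A y ->
     {in upper :\: S, forall p, (0 < E p.1 p.2 x)%N = (0 < E p.1 p.2 y)%N} -> A x) ->
  (0 < P A)%E ->
  cond_prob P [set x | edge_sum S x = n] A = poisson_mass (mean_sum S) n.
Proof.
move=> Sup satA PA; have defA := pattern_event_saturated satA.
have mA : measurable A by rewrite defA; exact: measurable_pattern_event.
have prA : 0 < pr A by rewrite /pr fine_gt0 // PA (prE mA) ltry.
have WS : [disjoint upper :\: S & S]%B.
  by rewrite finset.disjoints_subset finset.setDE finset.subsetIr.
have disj0 (X : {set 'I_N * 'I_N}) : [disjoint X & finset.set0]%B.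
  by rewrite finset.disjoints_subset finset.setC0 finset.subsetT.
have := pr_edge_sum_pattern (fun _ => None)
  (fun b => exists2 y, A y & adjacency_pattern (upper :\: S) y = b) n
  (disj0 S) (disj0 _) WS Sup (finset.sub0set _) (finset.subsetDl _ _).
rewrite constraint_event0 setIT setTI -defA => prSA.
change (pr ([set x | edge_sum S x = n] `&` A) / pr A = poisson_mass (mean_sum S) n).
by rewrite prSA mulfK // gt_eqF.
Qed.

End PoissonianGraph.

Unset Implicit Arguments.

Theorem lemma3p3 (d : measure_display) (T : measurableType d) (R : realType)
  (P : probability T R) (N : nat) (lam : 'I_N -> R)
  (E : 'I_N -> 'I_N -> T -> nat) (A1 A2 : 'I_N) (k t : nat)
  (B1 B2 : nat -> {set 'I_N}) :
  (forall i, 0 < lam i) ->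
  poissonian_graph P lam E ->
  A1 != A2 ->
  (* the conditioning event: N^{(1)}_m = B1 m for m <= k and
     N^{(2)}_m = B2 m for m <= t *)
  let Ev := [set x | (forall m, (m <= k)%N -> nbhd_ball (fun i j => E i j x) A1 m = B1 m)
                  /\ (forall m, (m <= t)%N -> nbhd_ball (fun i j => E i j x) A2 m = B2 m)] in
  B1 k :&: B2 t = finset.set0 ->
  (0 < P Ev)%E ->
  forall n : nat,
    cond_prob P
      [set x | (\sum_(i in shell (nbhd_ball (fun i j => E i j x) A1) k)
                 \sum_(j in shell (nbhd_ball (fun i j => E i j x) A2) t) E i j x)%N = n]
      Ev
    = poisson_mass ((\sum_(i in shell B1 k) lam i) * (\sum_(j in shell B2 t) lam j)
                      / \sum_(l < N) lam l) n.
Proof.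
move=> _ graphE _ Ev B12 PEv n.
have B12' : [disjoint B1 k & B2 t]%B by rewrite -finset.setI_eq0 B12.
set sh1 := shell B1 k; set sh2 := shell B2 t.
have sh12 : [disjoint sh1 & sh2]%B := disjoint_shells B12'.
set S := @sort_pair N @: finset.setX sh1 sh2.
rewrite /cond_prob (_ : _ `&` Ev = [set x | edge_sum E S x = n] `&` Ev); last first.
  apply/seteqP; split => x [/= sx [x1 x2]]; split => //; move: sx => /=;
  by rewrite /S (edge_sum_sort_pair graphE _ sh12) (eq_shell x1) (eq_shell x2).
rewrite -(mean_sum_sort_pair lam sh12).
apply: (cond_prob_edge_sum graphE) => //; first exact: sort_pair_imset_upper.
move=> x y [y1 y2] xy.
have adjE i j : ~~ ((i \in sh1) && (j \in sh2) || (i \in sh2) && (j \in sh1)) ->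
    Defs.adjacent (fun i j => E i j x) i j = Defs.adjacent (fun i j => E i j y) i j.
  by move=> ij; apply: (adjacent_off_pairs graphE xy); rewrite /S mem_sort_pair_imset.
split; first exact: nbhd_ball_off_shells B12' adjE y1.
apply: (nbhd_ball_off_shells (C := B1) (t := k) _ _ y2) => [|i j].
  by rewrite disjoint_sym.
by rewrite orbC; exact: adjE.
Qed.
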